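(* Let $G$ be a simple graph on $n$ vertices, where $n$ is odd. Then $$\mathrm{HE}(G) < \frac{n}{2}\left(1+\sqrt{n}-\frac{1}{\sqrt{n}}\right).$$
   Context: All graphs are finite, simple and undirected. For a graph $G$ on $n$ vertices with adjacency matrix $A$, let $\lambda_1 \ge \lambda_2 \ge \cdots \ge \lambda_n$ be the eigenvalues of $A$ and $r := \lfloor n/2 \rfloor$. The Hückel energy of $G$ is $\mathrm{HE}(G) = 2\sum_{i=1}^{r}\lambda_i$ if $n=2r$, and $\mathrm{HE}(G) = 2\sum_{i=1}^{r}\lambda_i + \lambda_{r+1}$ if $n=2r+1$. *)

From HB Require Import structures.
From mathcomp Require Import all_boot all_order all_algebra all_field.
Set Implicit Arguments. Unset Strict Implicit. Unset Printing Implicit Defensive.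
Import Order.TTheory GRing.Theory Num.Theory.
Local Open Scope ring_scope.

Definition simple_graph (n : nat) (e : rel 'I_n) : Prop :=
  (forall i j, e i j = e j i) /\ (forall i, ~~ e i i).

Definition adj_mx (n : nat) (e : rel 'I_n) : 'M[algC]_n :=
  \matrix_(i, j) (e i j)%:R.

Definition eigenvalues (n : nat) (A : 'M[algC]_n) : seq algC :=
  sort (fun x y => y <= x) (sval (closed_field_poly_normal (char_poly A))).

(* Hückel energy: lam_1 >= ... >= lam_n, r = floor(n/2);
   HE = 2 * sum_{i=1}^r lam_i  (+ lam_{r+1} if n odd).  Indices 0-based. *)
Definition huckel_energy (n : nat) (e : rel 'I_n) : algC :=
  let s := eigenvalues (adj_mx e) in
  let r := n./2 in
  2 * (\sum_(i < r) s`_i) + (if odd n then s`_r else 0).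

(* Let x_0 >= ... >= x_(n-1) be the adjacency eigenvalues and N = 2|E|.
   They are real, sum to 0, their squares sum to N (the trace of A^2), and
   n x_0 >= N (Rayleigh quotient of the all-ones vector).  For n = 2k+3 write
   HE = 2 x_0 + sum_i w_i x_(i+1) with weights w = (2,...,2,1,0,...,0) (k twos) on
   the m = n-1 remaining eigenvalues.  Then HE - x_0 n/m is the covariance of w and
   (x_1,...,x_m), so by Cauchy-Schwarz its square is at most
   (m - 1 - 1/m) (N - x_0^2 n/m).  An exact sum-of-squares identity shows that this
   forces HE <= n/2 (1 + sqrt n - 1/sqrt n), with equality only if
   x_0 = (n-1+sqrt n)/2 and N = n x_0, i.e. n sqrt n = 2N - n(n-1).  Squaring, the
   odd number n^3 would be the square of an even integer. *)

From HB Require Import structures.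
From mathcomp Require Import all_boot all_order all_algebra all_field.
From mathcomp Require Import ring lra zify.
Set Implicit Arguments.
Unset Strict Implicit.
Unset Printing Implicit Defensive.
Import Order.TTheory GRing.Theory Num.Theory.
Local Open Scope ring_scope.
Local Open Scope sesquilinear_scope.

Section CauchySchwarz.
Variables (R : realFieldType) (I : finType).
Implicit Types u v : I -> R.

Lemma sum_sqr_comb u v (a b : R) :
  \sum_i (a * u i + b * v i) ^+ 2 =
  a ^+ 2 * \sum_i u i ^+ 2 + 2 * a * b * \sum_i u i * v i + b ^+ 2 * \sum_i v i ^+ 2.
Proof.
rewrite !mulr_sumr -!big_split /=; apply: eq_bigr => i _; ring.
Qed.

Lemma sqr_sum_mul_le u v :
  (\sum_i u i * v i) ^+ 2 <= (\sum_i u i ^+ 2) * (\sum_i v i ^+ 2).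
Proof.
set A := \sum_i u i ^+ 2; set B := \sum_i u i * v i; set C := \sum_i v i ^+ 2.
have A_ge0 : 0 <= A by apply: sumr_ge0 => i _; exact: sqr_ge0.
have [A0 | A_gt0] := eqVneq A 0.
  have u0 i : u i = 0.
    by apply/eqP; rewrite -sqrf_eq0; apply/eqP/(psumr_eq0P _ A0) => // j _; exact: sqr_ge0.
  have B0 : B = 0 by rewrite /B big1 // => i _; rewrite u0 mul0r.
  by rewrite A0 B0 expr0n mul0r.
have : 0 <= \sum_i ((- B) * u i + A * v i) ^+ 2.
  by apply: sumr_ge0 => i _; exact: sqr_ge0.
rewrite sum_sqr_comb -/A -/B -/C.
have -> : (- B) ^+ 2 * A + 2 * - B * A * B + A ^+ 2 * C = A * (A * C - B ^+ 2) by ring.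
by rewrite pmulr_rge0 ?subr_ge0 // lt_def A_gt0.
Qed.

Lemma sum_centered_mul u v :
  #|I| != 0%N ->
  \sum_i (u i - (\sum_j u j) / #|I|%:R) * (v i - (\sum_j v j) / #|I|%:R) =
  \sum_i u i * v i - (\sum_i u i) * (\sum_i v i) / #|I|%:R.
Proof.
move=> I0; set m := #|I|%:R; set U := \sum_j u j; set V := \sum_j v j.
have m0 : m != 0 by rewrite pnatr_eq0.
rewrite (eq_bigr (fun i => u i * v i - (V / m * u i + U / m * v i) + U / m * (V / m)));
  last by move=> i _; ring.
rewrite !big_split /= sumrN big_split /= -!mulr_sumr sumr_const -/U -/V.
by rewrite -mulr_natr; field.
Qed.

Lemma sum_centered_sqr u : #|I| != 0%N ->
  \sum_i (u i - (\sum_j u j) / #|I|%:R) ^+ 2 =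
  \sum_i u i ^+ 2 - (\sum_i u i) ^+ 2 / #|I|%:R.
Proof. by move=> I0; rewrite -sum_centered_mul. Qed.

Lemma covariance_sqr_le u v : #|I| != 0%N ->
  (\sum_i u i * v i - (\sum_i u i) * (\sum_i v i) / #|I|%:R) ^+ 2 <=
  (\sum_i u i ^+ 2 - (\sum_i u i) ^+ 2 / #|I|%:R) *
  (\sum_i v i ^+ 2 - (\sum_i v i) ^+ 2 / #|I|%:R).
Proof.
by move=> I0; rewrite -!sum_centered_sqr // -sum_centered_mul // sqr_sum_mul_le.
Qed.

End CauchySchwarz.

Lemma odd_cube_neq_even_sqr (n b : nat) : odd n -> ~~ odd b -> (n ^ 3 != b ^ 2)%N.
Proof. by move=> on eb; apply/eqP => /(congr1 odd); rewrite !oddX on (negbTE eb). Qed.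

Lemma even_double_sub_mul_pred (n N : nat) : (n * (n - 1) <= N.*2)%N ->
  ~~ odd (N.*2 - n * (n - 1)).
Proof.
move=> le_nN; rewrite oddB // odd_double oddM.
by case: n {le_nN} => //= n; rewrite subSS subn0; case: odd.
Qed.

Lemma sub1_subVr_gt0 (R : realFieldType) (m : R) : 2 <= m -> 0 < m - 1 - m^-1.
Proof.
move=> m_ge2; have m_inv : m * m^-1 = 1 by rewrite divff // gt_eqF //; lra.
have : 0 < m^-1 by rewrite invr_gt0; lra.
nra.
Qed.

Lemma le_huckel_bound (R : realFieldType) (n : nat) (s : R) :
  (3 <= n)%N -> 0 < s -> s ^+ 2 = n%:R -> n%:R <= n%:R / 2 * (1 + s - s^-1).
Proof.
move=> n_ge3 s_gt0 s_sqr; have n_ge3R : 3 <= n%:R :> R by rewrite (ler_nat R 3 n).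
have s_le : s <= n%:R - 1 by move: n_ge3R; rewrite -s_sqr; nra.
have -> : n%:R / 2 * (1 + s - s^-1) = (n%:R + n%:R * s - s) / 2.
  by rewrite -s_sqr; field; rewrite gt_eqF.
rewrite ler_pdivlMr; last lra.
have : 0 <= (n%:R - 1 - s) * s by apply: mulr_ge0; lra.
rewrite !mulrBl mul1r -expr2 s_sqr; lra.
Qed.

Lemma odd_mul_sqrt_neq_even (R : realFieldType) (n N : nat) (s : R) :
  odd n -> 0 <= s -> s ^+ 2 = n%:R -> n%:R * (n%:R - 1 + s) != N.*2%:R.
Proof.
move=> n_odd s_ge0 s_sqr; apply/eqP => eq_N.
have n_gt0 : (0 < n)%N by case: (n) n_odd.
have natr_pred : (n - 1)%:R = n%:R - 1 :> R by rewrite natrB.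
have le_nN : (n * (n - 1) <= N.*2)%N.
  by rewrite -(ler_nat R) -eq_N natrM natr_pred ler_pM2l ?ltr0n // lerDl.
have even_diff := even_double_sub_mul_pred le_nN.
have diffE : (N.*2 - n * (n - 1))%:R = n%:R * s :> R.
  by rewrite natrB // -eq_N natrM natr_pred; ring.
have /eqP := odd_cube_neq_even_sqr n_odd even_diff; apply.
apply/eqP; rewrite -(eqr_nat R) !natrX; apply/eqP.
by have := congr1 (fun x => x ^+ 2) diffE; rewrite exprMn s_sqr -exprSr => ->.
Qed.

Lemma le_pred_of_sqr_le (R : realFieldType) (n N : nat) (a : R) :
  (3 <= n)%N -> (N <= n * (n - 1))%N -> a ^+ 2 * n%:R / (n%:R - 1) <= N%:R ->
  a <= n%:R - 1.
Proof.
move=> n_ge3 N_le; have n_ge3R : 3 <= n%:R :> R by rewrite (ler_nat R 3 n).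
have n_gt0 : (0 < n)%N by apply: leq_trans n_ge3.
have N_le_R : N%:R <= n%:R * (n%:R - 1) :> R.
  by rewrite -[1]/(1%:R) -natrB ?n_gt0 // -natrM ler_nat.
rewrite ler_pdivrMr; last lra.
move=> a2n_le; have : a ^+ 2 * n%:R <= n%:R * (n%:R - 1) * (n%:R - 1).
  by apply: le_trans a2n_le _; rewrite ler_wpM2r //; lra.
rewrite mulrC -mulrA ler_pM2l ?ltr0n // -expr2 => a2_le.
by rewrite !expr2 in a2_le; nra.
Qed.

Lemma huckel_scalar_bound (R : realFieldType) (n N : nat) (s a H : R) :
  (3 <= n)%N -> odd n -> 0 < s -> s ^+ 2 = n%:R ->
  (N <= n * (n - 1))%N -> N%:R <= n%:R * a ->
  (H - a * n%:R / (n%:R - 1)) ^+ 2 <=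
    (n%:R - 1 - 1 - (n%:R - 1)^-1) * (N%:R - a ^+ 2 * n%:R / (n%:R - 1)) ->
  H < n%:R / 2 * (1 + s - s^-1).
Proof.
move=> n_ge3 n_odd s_gt0 s_sqr N_le N_le_a.
have n_ge3R : 3 <= n%:R :> R by rewrite (ler_nat R 3 n).
have n_gt0 : (0 < n)%N by apply: leq_trans n_ge3.
set m := n%:R - 1; set P := m - 1 - m^-1; set Z := N%:R - _ => H_sqr_le.
have m_ge2 : 2 <= m by rewrite /m; lra.
have P_gt0 : 0 < P := sub1_subVr_gt0 m_ge2.
have Z_ge0 : 0 <= Z.
  by rewrite -(pmulr_rge0 _ P_gt0); exact: le_trans (sqr_ge0 _) H_sqr_le.
have a_le_m : a <= m by apply: le_pred_of_sqr_le n_ge3 N_le _; rewrite -subr_ge0.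
have n_le_bound := le_huckel_bound n_ge3 s_gt0 s_sqr.
set bound := n%:R / 2 * _ in n_le_bound *.
rewrite ltNge; apply/negP => bound_le_H.
set v := bound - a * n%:R / m.
have v_ge0 : 0 <= v.
  rewrite subr_ge0 (le_trans _ n_le_bound) // ler_pdivrMr; last lra.
  by rewrite mulrC ler_pM2l // ltr0n n_gt0.
have v_sqr_le : v ^+ 2 <= P * Z.
  by apply: le_trans H_sqr_le; rewrite !expr2 ler_pM // lerB.
set a' := (m + s) / 2.
(* [v ^+ 2 <= P * Z] forces both nonnegative terms on the right to vanish *)
have gap : v ^+ 2 - P * Z = n%:R * (a - a') ^+ 2 + P * (n%:R * a - N%:R).
  rewrite /v /bound /a' /Z /P /m -s_sqr.
  by field; rewrite s_sqr !gt_eqF //; lra.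
have dev_ge0 : 0 <= n%:R * (a - a') ^+ 2 by rewrite mulr_ge0 ?ler0n ?sqr_ge0.
have slack_ge0 : 0 <= P * (n%:R * a - N%:R) by rewrite mulr_ge0 ?(ltW P_gt0) ?subr_ge0.
have slack0 : P * (n%:R * a - N%:R) = 0 by lra.
have dev0 : n%:R * (a - a') ^+ 2 = 0 by lra.
have N_eq : N%:R = n%:R * a.
  by move/eqP: slack0; rewrite mulf_eq0 gt_eqF //= subr_eq0 => /eqP.
have a_eq : a = a'.
  by move/eqP: dev0; rewrite mulf_eq0 pnatr_eq0 (gtn_eqF n_gt0) sqrf_eq0 subr_eq0 => /eqP.
have := odd_mul_sqrt_neq_even N n_odd (ltW s_gt0) s_sqr.
by apply/negP; rewrite negbK -mul2n natrM N_eq a_eq /a' /m; apply/eqP; field.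
Qed.

Definition huckel_weight (R : nzRingType) (k i : nat) : R :=
  if (i < k)%N then 2 else (i == k)%:R.

Lemma sum_huckel_weight_mul (R : nzRingType) (k m : nat) (F : nat -> R) : (k < m)%N ->
  \sum_(i < m) huckel_weight R k i * F i = 2 * \sum_(i < k) F i + F k.
Proof.
move=> lt_km; rewrite -(big_mkord xpredT (fun i => huckel_weight R k i * F i)).
rewrite (big_cat_nat (leq0n k) (ltnW lt_km)) /= [X in _ + X]big_ltn //.
rewrite /huckel_weight ltnn eqxx mul1r big_nat_cond.
rewrite (eq_bigr (fun i => 2 * F i)) => [|i /andP[/andP[_ ->]] //].
rewrite -mulr_sumr -big_nat_cond big_mkord [X in F k + X]big1_seq ?addr0 //.
move=> i /andP[_]; rewrite mem_index_iota => /andP[lt_ki _].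
by rewrite ltnNge (ltnW lt_ki) gtn_eqF ?mul0r.
Qed.

Lemma sum_huckel_weight (R : nzRingType) (k m : nat) : (k < m)%N ->
  \sum_(i < m) huckel_weight R k i = (k.*2.+1)%:R.
Proof.
move=> lt_km; under eq_bigr do rewrite -[huckel_weight _ _ _]mulr1.
rewrite (sum_huckel_weight_mul (fun=> 1) lt_km) sumr_const card_ord.
by rewrite -[RHS]natr1 -muln2 natrM mulr_natl mulr_natr.
Qed.

Lemma sum_huckel_weight_sqr (R : nzRingType) (k m : nat) : (k < m)%N ->
  \sum_(i < m) huckel_weight R k i ^+ 2 = (4 * k).+1%:R.
Proof.
move=> lt_km; under eq_bigr do rewrite expr2.
rewrite (sum_huckel_weight_mul (huckel_weight R k) lt_km) /huckel_weight ltnn eqxx.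
rewrite (eq_bigr (fun=> 2)) => [|i _]; last by rewrite ltn_ord.
by rewrite sumr_const card_ord mulr_natl -!mulrnA -[true%:R]/1 natr1 (mulnC k) mulnA.
Qed.

Lemma huckel_sum_covariance (R : realFieldType) (k N : nat) (x : seq R) :
  size x = k.*2.+3 -> \sum_(z <- x) z = 0 -> \sum_(z <- x) z ^+ 2 = N%:R ->
  let m : R := k.*2.+2%:R in
  (2 * (\sum_(i < k.+1) x`_i) + x`_k.+1 - x`_0 * (m + 1) / m) ^+ 2 <=
    (m - 1 - m^-1) * (N%:R - x`_0 ^+ 2 * (m + 1) / m).
Proof.
move=> x_size x_sum x_sum2 /=; set m := k.*2.+2; set a := x`_0; pose y i := x`_i.+1.
have x_split (F : R -> R) : \sum_(z <- x) F z = F a + \sum_(i < m) F (y i).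
  by rewrite (big_nth 0) x_size big_nat_recl // big_mkord.
have y_sum : \sum_(i < m) y i = - a.
  by move: (x_split id); rewrite x_sum => /eqP; rewrite eq_sym addrC addr_eq0 => /eqP.
have y_sum2 : \sum_(i < m) y i ^+ 2 = N%:R - a ^+ 2.
  by rewrite -x_sum2 (x_split (fun z => z ^+ 2)) (addrC (a ^+ 2)) addrK.
have lt_km : (k < m)%N by rewrite /m; lia.
have -> : 2 * \sum_(i < k.+1) x`_i + x`_k.+1 =
    2 * a + \sum_(i < m) huckel_weight R k i * y i.
  rewrite (sum_huckel_weight_mul y lt_km) -(big_mkord xpredT) big_nat_recl //.
  by rewrite big_mkord mulrDr addrA.
have := covariance_sqr_le (fun i : 'I_m => huckel_weight R k i) (fun i : 'I_m => y i).
rewrite card_ord (sum_huckel_weight R lt_km) (sum_huckel_weight_sqr R lt_km) y_sum y_sum2.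
have wE : k.*2.+1%:R = m%:R - 1 :> R by rewrite -[m%:R]natr1 addrK.
have w2E : (4 * k).+1%:R = m%:R *+ 2 - 3 :> R.
  by apply/eqP; rewrite eq_sym subr_eq -mulr_natr -natrM -natrD eqr_nat /m; apply/eqP; lia.
have m_neq0 : m%:R != 0 :> R by rewrite pnatr_eq0.
rewrite wE w2E => /(_ isT); set S := \sum_(i < m) _; set mR := m%:R.
suff [-> ->] : 2 * a + S - a * (mR + 1) / mR = S - (mR - 1) * - a / mR /\
    (mR - 1 - mR^-1) * (N%:R - a ^+ 2 * (mR + 1) / mR) =
    (mR *+ 2 - 3 - (mR - 1) ^+ 2 / mR) * (N%:R - a ^+ 2 - (- a) ^+ 2 / mR) by [].
by split; field.
Qed.

Lemma odd_huckel_bound (R : realFieldType) (n N : nat) (x : seq R) (s : R) :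
  odd n -> size x = n -> 0 < s -> s ^+ 2 = n%:R ->
  \sum_(z <- x) z = 0 -> \sum_(z <- x) z ^+ 2 = N%:R -> N%:R <= n%:R * x`_0 ->
  (N <= n * (n - 1))%N ->
  2 * (\sum_(i < n./2) x`_i) + x`_(n./2) < n%:R / 2 * (1 + s - s^-1).
Proof.
move=> n_odd x_size s_gt0 s_sqr x_sum x_sum2 N_le_a N_le.
have [n_lt3 | n_ge3] := ltnP n 3.
  have n1 : n = 1%N by move: n_odd n_lt3; case: (n) => [|[|[|]]].
  have s1 : s = 1.
    move/eqP: s_sqr; rewrite n1 sqrf_eq1 => /orP[/eqP //|/eqP s_eq].
    by move: s_gt0; rewrite s_eq; lra.
  have [a x_eq] : exists a, x = [:: a].
    by move: x_size; rewrite n1; case: (x) => [|a [|]] // _; exists a.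
  rewrite n1 s1 /= big_ord0 mulr0 add0r invr1.
  by move: x_sum; rewrite x_eq big_seq1 /= => ->; lra.
pose k := (n./2).-1.
have n_eq : n = k.*2.+3.
  by rewrite /k -{1}(odd_double_half n) n_odd; move: n_ge3; lia.
have -> : n./2 = k.+1 by rewrite n_eq -doubleS; exact: (half_bit_double k.+1 true).
apply: huckel_scalar_bound n_ge3 n_odd s_gt0 s_sqr N_le N_le_a _.
have -> : n%:R = k.*2.+2%:R + 1 :> R by rewrite n_eq natr1.
by rewrite addrK; apply: huckel_sum_covariance; rewrite -?n_eq.
Qed.

Lemma char_poly_conj (F : fieldType) n (P A : 'M[F]_n) : P \in unitmx ->
  char_poly (invmx P *m A *m P) = char_poly A.
Proof.
move=> P_unit; rewrite /char_poly /char_poly_mx.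
set f := map_mx (@polyC F).
have fM (B C : 'M[F]_n) : f (B *m C) = f B *m f C by rewrite /f map_mxM.
have -> : 'X%:M - f (invmx P *m A *m P) = f (invmx P) *m ('X%:M - f A) *m f P.
  rewrite !fM mulmxBr mulmxBl; congr (_ - _).
  by rewrite scalar_mxC -mulmxA -fM mulVmx // /f map_mx1 mulmx1.
by rewrite !det_mulmx mulrC mulrA -det_mulmx -fM mulmxV // /f map_mx1 det1 mul1r.
Qed.

Lemma size_eigenvalues n (A : 'M[algC]_n) : size (eigenvalues A) = n.
Proof.
rewrite /eigenvalues size_sort; case: closed_field_poly_normal => r /= cpA.
have := size_char_poly A; rewrite cpA (monicP (char_poly_monic _)) scale1r.
by rewrite size_prod_XsubC => -[].
Qed.

Section Spectrum.
Variables (n : nat) (A : 'M[algC]_n).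
Let P := spectralmx A.
Let d := spectral_diag A.

Let P_unitaryl : P^t* *m P = 1%:M.
Proof. by rewrite -invmx_unitary ?spectral_unitarymx // mulVmx ?spectral_unit. Qed.

Let P_unitaryr : P *m P^t* = 1%:M.
Proof. exact/unitarymxP/spectral_unitarymx. Qed.

Let mxtrace_conj (B : 'M[algC]_n) : \tr (P^t* *m B *m P) = \tr B.
Proof. by rewrite mxtrace_mulC mulmxA P_unitaryr mul1mx. Qed.

Section Normal.
Hypothesis A_normal : A \is normalmx.

Let A_spectral : A = P^t* *m diag_mx d *m P.
Proof. by rewrite -invmx_unitary ?spectral_unitarymx //; exact/orthomx_spectralP. Qed.

Lemma perm_eq_eigenvalues_spectral :
  perm_eq (eigenvalues A) [seq d 0 i | i <- enum 'I_n].
Proof.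
have cpA : char_poly A = \prod_(z <- [seq d 0 i | i <- enum 'I_n]) ('X - z%:P).
  rewrite {1}A_spectral -invmx_unitary ?spectral_unitarymx //.
  rewrite char_poly_conj ?spectral_unit // char_poly_trig ?diag_mx_is_trig //.
  by rewrite big_map big_enum /=; apply: eq_bigr => i _; rewrite mxE eqxx mulr1n.
rewrite /eigenvalues; case: closed_field_poly_normal => l /= cpAE.
rewrite perm_sort; apply: prod_XsubC_eq.
by rewrite -cpA cpAE (monicP (char_poly_monic _)) scale1r.
Qed.

Lemma sum_eigenvalues : \sum_(z <- eigenvalues A) z = \tr A.
Proof.
rewrite (perm_big _ perm_eq_eigenvalues_spectral) big_map big_enum /=.
by rewrite [in RHS]A_spectral mxtrace_conj mxtrace_diag.
Qed.

Lemma sum_eigenvalues_sqr : \sum_(z <- eigenvalues A) z ^+ 2 = \tr (A *m A).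
Proof.
rewrite (perm_big _ perm_eq_eigenvalues_spectral) big_map big_enum /=.
have -> : A *m A = P^t* *m (diag_mx d *m diag_mx d) *m P.
  by rewrite {1 2}A_spectral !mulmxA -[_ *m P *m P^t*]mulmxA P_unitaryr mulmx1.
rewrite mxtrace_conj mul_mx_diag /mxtrace; apply: eq_bigr => i _.
by rewrite !mxE eqxx mulr1n expr2.
Qed.

End Normal.

Section Hermitian.
Hypothesis A_herm : A \is hermsymmx.

Let A_normal : A \is normalmx := hermitian_normalmx A_herm.

Lemma eigenvalues_real : {in eigenvalues A, forall z, z \is Num.real}.
Proof.
move=> z; rewrite (perm_mem (perm_eq_eigenvalues_spectral A_normal)) => /mapP[i _ ->].
by move/mxOverP: (hermitian_spectral_diag_real A_herm); apply.
Qed.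

Lemma eigenvalue_le_head z : z \in eigenvalues A -> z <= (eigenvalues A)`_0.
Proof.
have : sorted (fun a b => b <= a) (eigenvalues A).
  apply: (sort_sorted_in (P := Num.real)) => [a b a_real b_real|].
    by rewrite orbC real_leVge.
  by apply/allP => w w_in; apply: eigenvalues_real; rewrite /eigenvalues mem_sort.
case: (eigenvalues A) => [|a r] //= r_path; rewrite in_cons => /orP[/eqP -> //|z_r].
by move/allP: (order_path_min (fun b c d h1 h2 => le_trans h2 h1) r_path); apply.
Qed.

Lemma rayleigh_le_eigenvalues_head (u : 'rV[algC]_n) :
  (u *m A *m u^t*) 0 0 <= (eigenvalues A)`_0 * (u *m u^t*) 0 0.
Proof.
set v := u *m P^t*.
have Pu : P *m u^t* = v^t* by rewrite /v trmx_mul map_mxM trmxCK.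
have -> : u *m A *m u^t* = v *m diag_mx d *m v^t*.
  rewrite [in LHS](orthomx_spectralP A_normal) invmx_unitary ?spectral_unitarymx //.
  by rewrite !mulmxA -[_ *m P *m u^t*]mulmxA Pu.
have -> : u *m u^t* = v *m v^t*.
  by rewrite -Pu /v mulmxA -[u *m P^t* *m P]mulmxA P_unitaryl mulmx1.
rewrite -subr_ge0 !mxE mulr_sumr -sumrB; apply: sumr_ge0 => k _.
rewrite mul_mx_diag !mxE; set c := \sum_j _.
have -> : (eigenvalues A)`_0 * (c * c^*) - c * d 0 k * c^* =
    ((eigenvalues A)`_0 - d 0 k) * (c * c^*) by ring.
rewrite mulr_ge0 ?mul_conjC_ge0 // subr_ge0 eigenvalue_le_head //.
by rewrite (perm_mem (perm_eq_eigenvalues_spectral A_normal)) map_f ?mem_enum.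
Qed.

End Hermitian.

End Spectrum.

(* algC is not a realFieldType: the (real) eigenvalues are moved to algR, where the
   real-field bound applies. *)
Lemma algRval_lt (a b : algR) : (a < b) = (algRval a < algRval b).
Proof. by []. Qed.

Lemma algRval_le (a b : algR) : (a <= b) = (algRval a <= algRval b).
Proof. by []. Qed.

Lemma odd_huckel_bound_algC (n N : nat) (x : seq algC) :
  odd n -> size x = n -> {in x, forall z, z \is Num.real} ->
  \sum_(z <- x) z = 0 -> \sum_(z <- x) z ^+ 2 = N%:R -> N%:R <= n%:R * x`_0 ->
  (N <= n * (n - 1))%N ->
  2 * (\sum_(i < n./2) x`_i) + x`_(n./2) < n%:R / 2 * (1 + sqrtC n%:R - (sqrtC n%:R)^-1).
Proof.
move=> n_odd x_size x_real x_sum x_sum2 N_le_a N_le.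
have [xR xRE] : exists xR : seq algR, map algRval xR = x.
  exists (map (insubd 0) x); rewrite -map_comp; apply: map_id_in => z z_x /=.
  by rewrite insubdK ?x_real.
have nth_xR i : algRval xR`_i = x`_i.
  have [i_lt | i_ge] := ltnP i (size xR); first by rewrite -xRE (nth_map 0).
  by rewrite !nth_default // -xRE size_map.
have [s sE] : exists s : algR, algRval s = sqrtC n%:R.
  by exists (insubd 0 (sqrtC n%:R)); rewrite insubdK // ger0_real // sqrtC_ge0 ler0n.
have n_gt0 : (0 < n)%N by case: (n) n_odd.
have xR_size : size xR = n by rewrite -x_size -xRE size_map.
have s_gt0 : 0 < s.
  by rewrite algRval_lt; have := sqrtC_gt0 (n%:R : algC); rewrite -sE ltr0n n_gt0.
have s_sqr : s ^+ 2 = n%:R.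
  by apply: val_inj; rewrite /= rmorphXn /= sE expr1 -expr2 sqrtCK rmorph_nat.
have xR_sum : \sum_(z <- xR) z = 0.
  by apply: val_inj; rewrite /= rmorph_sum -(big_map _ xpredT id) xRE x_sum.
have xR_sum2 : \sum_(z <- xR) z ^+ 2 = N%:R.
  apply: val_inj; rewrite /= rmorph_sum rmorph_nat -x_sum2 -xRE big_map.
  by apply: eq_bigr => z _; rewrite rmorphXn.
have xR_N_le : N%:R <= n%:R * xR`_0 by rewrite algRval_le rmorphM /= !rmorph_nat nth_xR.
have := odd_huckel_bound n_odd xR_size s_gt0 s_sqr xR_sum xR_sum2 xR_N_le N_le.
rewrite algRval_lt !(rmorphD, rmorphM, rmorphB, rmorph_sum, fmorphV, rmorph_nat, rmorph1) /= sE.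
under eq_bigr do rewrite nth_xR.
by rewrite nth_xR.
Qed.

Section Adjacency.
Variables (n : nat) (e : rel 'I_n).

Definition degree_sum : nat := \sum_i \sum_j e i j.

Lemma degree_sum_le : (forall i, ~~ e i i) -> (degree_sum <= n * (n - 1))%N.
Proof.
move=> e_irr; rewrite -[n in (n * _)%N]card_ord -sum_nat_const; apply: leq_sum => i _.
rewrite (bigD1 i) //= (negbTE (e_irr i)) add0n.
apply: leq_trans (_ : (\sum_(j | j != i) 1 <= _)%N).
  by apply: leq_sum => j _; exact: leq_b1.
by rewrite sum1_card cardC1 card_ord subn1.
Qed.

Lemma adj_mx_hermsym : (forall i j, e i j = e j i) -> adj_mx e \is hermsymmx.
Proof.
move=> e_sym; apply: realsym_hermsym.
  by apply/is_hermitianmxP; rewrite expr0 scale1r; apply/matrixP => i j; rewrite !mxE e_sym.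
by apply/mxOverP => i j; rewrite mxE realn.
Qed.

Lemma mxtrace_adj_mx : (forall i, ~~ e i i) -> \tr (adj_mx e) = 0.
Proof. by move=> e_irr; rewrite /mxtrace big1 // => i _; rewrite mxE (negbTE (e_irr i)). Qed.

Lemma mxtrace_adj_mx_sqr : (forall i j, e i j = e j i) ->
  \tr (adj_mx e *m adj_mx e) = degree_sum%:R.
Proof.
move=> e_sym; rewrite /degree_sum natr_sum; apply: eq_bigr => i _.
rewrite mxE natr_sum; apply: eq_bigr => j _.
by rewrite !mxE (e_sym j i); case: (e i j); rewrite ?mulr1 ?mulr0.
Qed.

Lemma degree_sum_le_head : (forall i j, e i j = e j i) ->
  degree_sum%:R <= n%:R * (eigenvalues (adj_mx e))`_0.
Proof.
move=> e_sym; set u : 'rV[algC]_n := const_mx 1.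
have uAu : (u *m adj_mx e *m u^t*) 0 0 = degree_sum%:R.
  rewrite /degree_sum natr_sum; under eq_bigr do rewrite natr_sum.
  rewrite exchange_big mxE; apply: eq_bigr => j _.
  rewrite !mxE conjC1 mulr1; apply: eq_bigr => i _.
  by rewrite !mxE mul1r.
have uu : (u *m u^t*) 0 0 = n%:R.
  rewrite mxE -[n in n%:R]card_ord -sumr_const; apply: eq_bigr => i _.
  by rewrite !mxE conjC1 mulr1.
by rewrite -uAu -uu mulrC rayleigh_le_eigenvalues_head // adj_mx_hermsym.
Qed.

End Adjacency.

Theorem mainTheorem3 (n : nat) (e : rel 'I_n) :
  simple_graph e -> odd n ->
  huckel_energy e <
    (n%:R / 2) * (1 + sqrtC (n%:R) - (sqrtC (n%:R))^-1).
Proof.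
move=> [e_sym e_irr] n_odd; have A_normal := hermitian_normalmx (adj_mx_hermsym e_sym).
rewrite /huckel_energy n_odd.
apply: (odd_huckel_bound_algC (N := degree_sum e)) => //.
- exact: size_eigenvalues.
- exact/eigenvalues_real/adj_mx_hermsym.
- by rewrite sum_eigenvalues // mxtrace_adj_mx.
- by rewrite sum_eigenvalues_sqr // mxtrace_adj_mx_sqr.
- exact: degree_sum_le_head.
- exact: degree_sum_le.
Qed.
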